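(* There exists a Stackelberg game $(G,L,F)$ such that $\mathcal{X}^{CCE}\not\subseteq\mathcal{X}^S$, i.e. some coarse correlated equilibrium of $G$ is not equal to $x_\varnothing$ for any $\mathbf{x}=[x_\pi]\in\mathbf{X}^S$.
   Context: A finite game is $G=(N,\{S_p\}_{p\in N},\{u_p\}_{p\in N})$ with players $N=\{1,\dots,n\}$, finite nonempty strategy sets $S_p$, and utilities $u_p:S\to\mathbb{R}$ on $S=\prod_{p\in N}S_p$; write $s=(s_p,s_{-p})$ with $s_{-p}\in S_{-p}=\prod_{q\neq p}S_q$. $\mathcal{X}=\Delta(S)$ is the set of probability distributions on $S$ and $u_p(x)=\sum_{s\in S}x(s)u_p(s)$ for $x\in\mathcal{X}$. For $P\subseteq N$, $\mathcal{X}^{CE}_P$ is the set of $x\in\mathcal{X}$ such that for every $p\in P$ and all $s_p\neq s_p'\in S_p$: $\sum_{s_{-p}\in S_{-p}} x(s_p,s_{-p})\,(u_p(s_p,s_{-p})-u_p(s_p',s_{-p}))\ge 0$; $\mathcal{X}^{CE}=\mathcal{X}^{CE}_N$ is the set of correlated equilibria of $G$. $\mathcal{X}^{CCE}$ is the set of coarse correlated equilibria of $G$: $x\in\mathcal{X}$ with $\sum_{s\in S}x(s)(u_p(s)-u_p(s_p',s_{-p}))\ge 0$ for all $p\in N$, $s_p'\in S_p$. A Stackelberg game (SG) is a triple $(G,L,F)$ with $L\cup F=N$ and $L\cap F=\emptyset$ (leaders and followers). For $P\subseteq N$, $\Pi_P$ is the set of ordered subsets of $P$ (finite sequences of pairwise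 distinct elements of $P$, including the empty sequence $\varnothing$); for $\pi\in\Pi_P$ and $p\in P$ not occurring in $\pi$, $\pi p$ is $\pi$ with $p$ appended; when used as a set, $\pi$ means its set of entries. $\mathbf{X}=\prod_{\pi\in\Pi_L}\mathcal{X}^{CE}_{\pi\cup F}$, with elements $\mathbf{x}=[x_\pi]_{\pi\in\Pi_L}$. For $\mathbf{x}\in\mathbf{X}$ and $\pi\in\Pi_L$, $x_\pi$ is stable if $u_p(x_\pi)\ge u_p(x_{\pi p})$ for all $p\in L\setminus\pi$; $\mathbf{x}$ is stable if $x_\varnothing$ is stable, and perfectly stable if $x_\pi$ is stable for every $\pi\in\Pi_L$; $\mathbf{X}^{S}$ and $\mathbf{X}^{PS}$ denote the sets of stable and perfectly stable elements of $\mathbf{X}$. $\mathcal{X}^S=\{x_\varnothing:\mathbf{x}\in\mathbf{X}^S\}$ and $\mathcal{X}^{PS}=\{x_\varnothing:\mathbf{x}\in\mathbf{X}^{PS}\}$ (for the given SG). *)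

From HB Require Import structures.
From mathcomp Require Import all_boot all_order all_algebra.
Set Implicit Arguments. Unset Strict Implicit. Unset Printing Implicit Defensive.
Import Order.TTheory GRing.Theory Num.Theory.
Local Open Scope ring_scope.

Definition prof (n : nat) (S : 'I_n -> finType) : finType :=
  {dffun forall p : 'I_n, S p}.

Section Game.
Variables (R : realFieldType) (n : nat) (S : 'I_n -> finType)
          (u : forall p : 'I_n, prof S -> R).

Definition dev (s : prof S) (p : 'I_n) (a : S p) : prof S :=
  finfun (dfwith (s : forall q, S q) a).

Definition is_dist (x : {ffun prof S -> R}) : Prop :=
  (forall s, 0 <= x s) /\ \sum_(s : prof S) x s = 1.

Definition expu (p : 'I_n) (x : {ffun prof S -> R}) : R :=
  \sum_(s : prof S) x s * u p s.

(* X^CE_P ; the sum over s_{-p} in S_{-p} is written as the sum over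
   profiles s whose p-th component is s_p. *)
Definition CE_P (P : {set 'I_n}) (x : {ffun prof S -> R}) : Prop :=
  is_dist x /\
  forall p, p \in P -> forall a a' : S p, a != a' ->
    0 <= \sum_(s : prof S | s p == a) x s * (u p s - u p (dev s a')).

Definition is_CE x := CE_P setT x.

Definition is_CCE (x : {ffun prof S -> R}) : Prop :=
  is_dist x /\
  forall p (a' : S p), 0 <= \sum_(s : prof S) x s * (u p s - u p (dev s a')).

Definition is_SG (L F : {set 'I_n}) : Prop :=
  L :|: F = setT /\ L :&: F = set0.

Definition ordsub (L : {set 'I_n}) (pi : seq 'I_n) : bool :=
  uniq pi && all (fun q => q \in L) pi.

(* bold x = [x_pi]_{pi in Pi_L}, represented as a function on sequences
   (only its values on Pi_L matter). bold x in bold X: *)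
Definition in_bX (L F : {set 'I_n}) (xb : seq 'I_n -> {ffun prof S -> R}) : Prop :=
  forall pi, ordsub L pi -> CE_P ([set q | q \in pi] :|: F) (xb pi).

Definition stable_at (L : {set 'I_n}) (xb : seq 'I_n -> {ffun prof S -> R})
    (pi : seq 'I_n) : Prop :=
  forall p, p \in L -> p \notin pi -> expu p (xb (rcons pi p)) <= expu p (xb pi).

Definition in_bXS (L F : {set 'I_n}) xb : Prop :=
  in_bX L F xb /\ stable_at L xb [::].

End Game.

From HB Require Import structures.
From mathcomp Require Import all_boot all_order all_algebra.
From mathcomp Require Import lra.
Import Order.TTheory GRing.Theory Num.Theory.
Local Open Scope ring_scope.

(* The root x_∅ of any bold x ∈ X lies in X^CE_F, because the empty
   sequence is an ordered subset of L and adds no leader to the constrained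
   player set.  So it suffices to exhibit a game, a follower set F, and a
   coarse correlated equilibrium violating the correlated-equilibrium
   constraint of some follower.  We take the game with no leaders and two
   followers, each with three strategies; only the first player has nonzero
   payoffs.  The distribution putting mass 1/2 on (0,0) and (1,1) is a CCE
   (every constant deviation yields at most the equilibrium payoff 1), but
   when recommended strategy 0 the first player gains by switching to 2. *)

Section StableRoot.
Variables (R : realFieldType) (n : nat) (S : 'I_n -> finType).
Variable u : forall p : 'I_n, prof S -> R.

Lemma bX_root_CE (L F : {set 'I_n}) (xb : seq 'I_n -> {ffun prof S -> R}) :
  in_bX u L F xb -> CE_P u F (xb [::]).
Proof.
move=> HX; have := HX [::] erefl.
suff -> : [set q | q \in [::]] :|: F = F by [].
by apply/setP => q; rewrite !inE.
Qed.

Lemma not_CE_not_stable_root (L F : {set 'I_n}) (x : {ffun prof S -> R}) :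
  ~ CE_P u F x ->
  forall xb, in_bXS u L F xb -> xb [::] <> x.
Proof. by move=> notCE xb [HX _] root_x; apply: notCE; rewrite -root_x; exact: bX_root_CE HX. Qed.

End StableRoot.

Section TwoPointUniform.
Variables (R : realFieldType) (T : finType) (s1 s2 : T).
Hypothesis s1_neq_s2 : s1 != s2.

Definition half2 : {ffun T -> R} :=
  [ffun s => if s == s1 then 2%:R^-1 else if s == s2 then 2%:R^-1 else 0].

Lemma sum_half2 (P : pred T) (f : T -> R) :
  \sum_(s | P s) half2 s * f s =
  (if P s1 then 2%:R^-1 * f s1 else 0) + (if P s2 then 2%:R^-1 * f s2 else 0).
Proof.
rewrite big_mkcond (bigD1 s1) //= (bigD1 s2) /=; last by rewrite eq_sym s1_neq_s2.
rewrite big1 ?addr0; first by rewrite !ffunE eqxx eq_sym (negbTE s1_neq_s2) eqxx.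
move=> s /andP [ne1 ne2]; rewrite ffunE (negbTE ne1) (negbTE ne2) mul0r.
by case: (P s).
Qed.

Lemma half2_ge0 (s : T) : 0 <= half2 s.
Proof. by rewrite ffunE; do 2?case: ifP => _ //; rewrite invr_ge0 ler0n. Qed.

Lemma half2_sum1 : \sum_(s : T) half2 s = 1.
Proof. by rewrite -(eq_bigr _ (fun s _ => mulr1 (half2 s))) sum_half2; lra. Qed.

End TwoPointUniform.

Section Example.
Variable R : realFieldType.

Definition strat : 'I_2 -> finType := fun _ => 'I_3.

Definition row_payoff (a b : 'I_3) : R :=
  match val a, val b with
  | 0%N, 0%N => 1
  | 1%N, 1%N => 1
  | 2%N, 0%N => 2%:R
  | 2%N, 1%N => - 2%:R
  | _, _ => 0
  end.

Definition payoff (p : 'I_2) (s : prof strat) : R :=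
  if val p == 0%N then row_payoff (s ord0) (s ord_max) else 0.

Definition profile (a b : 'I_3) : prof strat :=
  finfun (fun p : 'I_2 => (if val p == 0%N then a else b) : strat p).

Definition st0 : 'I_3 := ord0.
Definition st1 : 'I_3 := inord 1.
Definition st2 : 'I_3 := ord_max.

Lemma st1_neq_st0 : (st1 == st0) = false.
Proof. by apply/eqP => /(congr1 val); rewrite /= inordK. Qed.

Lemma profile_diag_neq : profile st0 st0 != profile st1 st1.
Proof.
apply/eqP => /(congr1 (fun s : prof strat => s ord0)).
by rewrite !ffunE => /eqP; rewrite eq_sym st1_neq_st0.
Qed.

Definition x_ex : {ffun prof strat -> R} :=
  @half2 R _ (profile st0 st0) (profile st1 st1).

Lemma devE (s : prof strat) (p : 'I_2) (a : strat p) (q : 'I_2) :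
  dev s a q = if p == q then (a : 'I_3) else s q.
Proof. by rewrite /dev ffunE; case: dfwithP => [|j /negbTE ->] //; rewrite eqxx. Qed.

Lemma x_ex_CCE : is_CCE payoff x_ex.
Proof.
split; first by split; [exact: half2_ge0 | exact: half2_sum1 profile_diag_neq].
move=> p a'; rewrite sum_half2 /=; last exact: profile_diag_neq.
rewrite /payoff; case: p a' => [[|[|//]] lt_p2] a' /=; last lra.
rewrite !devE /= !ffunE /=.
by case: a' => [[|[|[|//]]] lt_a3]; rewrite /row_payoff /= ?inordK //=; lra.
Qed.

(* Recommended strategy 0, the first player gains 2 - 1 by playing 2. *)
Lemma x_ex_not_CE : ~ CE_P payoff setT x_ex.
Proof.
move=> [_ /(_ ord0 (in_setT _) st0 st2 erefl)].
rewrite sum_half2; last exact: profile_diag_neq.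
rewrite /payoff /= !devE /= !ffunE /= st1_neq_st0 /row_payoff /= ?inordK /=.
lra.
Qed.

End Example.

Theorem mainTheorem12 (R : realFieldType) :
  exists (n : nat) (S : 'I_n -> finType) (u : forall p : 'I_n, prof S -> R)
         (L F : {set 'I_n}),
    (forall p, 0 < #|S p|)%N /\ is_SG L F /\
    exists x : {ffun prof S -> R},
      is_CCE u x /\
      forall xb : seq 'I_n -> {ffun prof S -> R}, in_bXS u L F xb -> xb [::] <> x.
Proof.
exists 2%N, strat, (@payoff R), set0, setT.
split; first by move=> p; rewrite card_ord.
split; first by split; [rewrite set0U | rewrite set0I].
exists (x_ex R); split; first exact: x_ex_CCE.
exact: not_CE_not_stable_root (@x_ex_not_CE R).
Qed.
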